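(* Let $k$ be finite, $L\in\mathbb{R}^{k\times k}$ any nonnegative task loss matrix, $\Phi:\mathbb{R}^k\times\{1,\dots,k\}\to\mathbb{R}$ a surrogate loss that is continuous and bounded from below, and $\mathcal{F}\subseteq\mathbb{R}^k$ a subspace of scores. Then $$H_{\Phi,L,\mathcal{F}}(\varepsilon)=\min_{i,j\in\mathrm{pred}(\mathcal{F}),\,i\ne j}H_{ij}(\varepsilon),$$ where $\mathrm{pred}(\mathcal{F})=\{\mathrm{pred}(f):f\in\mathcal{F}\}$ and $$H_{ij}(\varepsilon)=\inf_{f,q}\ \delta\phi(f,q)\ \text{ s.t. } \ell_i(q)\le\ell_j(q)-\varepsilon;\ \ell_i(q)\le\ell_c(q)\ \forall c\in\mathrm{pred}(\mathcal{F});\ f_j\ge f_c\ \forall c\in\mathrm{pred}(\mathcal{F});\ f\in\mathcal{F};\ q\in\Delta_k,$$ with $\ell_c(q)=(Lq)_c$.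
   Context: $\mathrm{pred}(f)$ is the smallest index maximizing $f_c$. For $q\in\Delta_k$: $\ell(f,q)=\sum_cq_cL(\mathrm{pred}(f),c)$, $\phi(f,q)=\sum_cq_c\Phi(f,c)$, $\delta\ell(f,q)=\ell(f,q)-\inf_{\hat f\in\mathcal{F}}\ell(\hat f,q)$, $\delta\phi(f,q)=\phi(f,q)-\inf_{\hat f\in\mathcal{F}}\phi(\hat f,q)$. Calibration function: $H_{\Phi,L,\mathcal{F}}(\varepsilon)=\inf\{\delta\phi(f,q):f\in\mathcal{F},q\in\Delta_k,\delta\ell(f,q)\ge\varepsilon\}$ ($+\infty$ if empty). Infima over empty sets are $+\infty$. *)

From HB Require Import structures.
From mathcomp Require Import all_boot all_order all_algebra.
From mathcomp Require Import all_classical all_reals all_analysis.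

Set Implicit Arguments.
Unset Strict Implicit.
Unset Printing Implicit Defensive.

Import Order.TTheory GRing.Theory Num.Theory numFieldNormedType.Exports.
Local Open Scope ring_scope.
Local Open Scope classical_set_scope.

(* Throughout, the number of classes is k = n.+1 (k >= 1), classes are 'I_n.+1,
   score vectors are row vectors f : 'rV[R]_n.+1 with f_c = f 0 c. *)

Section Calib.
Variable R : realType.
Variable n : nat.
Local Notation k := n.+1.

Definition pred (f : 'rV[R]_k) : 'I_k :=
  [arg min_(i < ord0 | [forall j, f 0 j <= f 0 i]) (i : nat)].

Definition simplex (q : 'rV[R]_k) : Prop :=
  (forall c, 0 <= q 0 c) /\ \sum_c q 0 c = 1.

Variable L : 'M[R]_k.
Variable Phi : 'rV[R]_k -> 'I_k -> R.
Variable F : {vspace 'rV[R]_k}.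

Definition ell (f q : 'rV[R]_k) : R := \sum_c q 0 c * L (pred f) c.
Definition phi (f q : 'rV[R]_k) : R := \sum_c q 0 c * Phi f c.

Definition delta_ell (f q : 'rV[R]_k) : \bar R :=
  ((ell f q)%:E - ereal_inf [set (ell g q)%:E | g in [set g | g \in F]])%E.
Definition delta_phi (f q : 'rV[R]_k) : \bar R :=
  ((phi f q)%:E - ereal_inf [set (phi g q)%:E | g in [set g | g \in F]])%E.

Definition calib (eps : R) : \bar R :=
  ereal_inf [set z | exists (f q : 'rV[R]_k), [/\ f \in F, simplex q,
     (eps%:E <= delta_ell f q)%E & z = delta_phi f q]].

Definition predF : set 'I_k := [set pred f | f in [set f | f \in F]].

Definition ellc (c : 'I_k) (q : 'rV[R]_k) : R := \sum_j L c j * q 0 j.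

Definition Hij (i j : 'I_k) (eps : R) : \bar R :=
  ereal_inf [set z | exists (f q : 'rV[R]_k), (ellc i q <= ellc j q - eps) /\
       (forall c, predF c -> ellc i q <= ellc c q) /\
       (forall c, predF c -> f 0 c <= f 0 j) /\
       (f \in F) /\ simplex q /\ z = delta_phi f q].

(* min_{i,j in pred(F), i <> j} H_ij(eps)  (min over a finite set; +oo if empty) *)
Definition Hmin (eps : R) : \bar R :=
  ereal_inf [set z | exists i j : 'I_k, [/\ predF i, predF j, i != j & z = Hij i j eps]].

End Calib.

From Pilot Require Import Defs.
From HB Require Import structures.
From mathcomp Require Import all_boot all_order all_algebra.
From mathcomp Require Import all_classical all_reals all_analysis.
Import Order.TTheory GRing.Theory Num.Theory numFieldNormedType.Exports.

(* Write i for a loss-minimising prediction in pred(F) at q. If (f, q) is feasible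
   for the calibration function, then delta_ell f q = ell_{pred f}(q) - ell_i(q)
   >= eps > 0 forces pred f <> i, and (f, q) itself is feasible for H_{i, pred f}.
   Conversely, let (f, q) be feasible for H_ij and pick g in F with pred g = j.
   For t > 0 the scores f + t g have prediction exactly j, since f_j dominates
   f on pred(F) (which contains pred f) and g_j beats every earlier index
   strictly; hence delta_ell (f + t g) q = ell_j(q) - ell_i(q) >= eps. As t -> 0
   the surrogate excess risk of f + t g tends to that of f by continuity of
   Phi, so the calibration function is below H_ij(eps). *)

Set Implicit Arguments.
Unset Strict Implicit.
Unset Printing Implicit Defensive.

Local Open Scope ring_scope.
Local Open Scope classical_set_scope.

Section ArgmaxPrediction.
Variables (R : realType) (n : nat).
Implicit Types (f g : 'rV[R]_n.+1) (i j c : 'I_n.+1).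

(* [Defs.pred] falls back to [ord0] in its [arg min]; any maximiser may replace it. *)
Lemma pred_arg_min f i1 : [forall j, f 0 j <= f 0 i1] ->
  Defs.pred f = [arg min_(i < i1 | [forall j, f 0 j <= f 0 i]) (i : nat)].
Proof.
move=> i1_max; rewrite /Defs.pred /arg_min /extremum; case: pickP => // none.
case: (@arg_minnP _ i1 (fun i => [forall j, f 0 j <= f 0 i]) (fun i => i : nat) i1_max)
  => i i_max i_min.
have i_least : [forall (j | [forall c, f 0 c <= f 0 j]), (i <= j)%N].
  by apply/forallP => j; apply/implyP/i_min.
by have := none i; rewrite /= i_max i_least.
Qed.

Lemma predP f : (forall c, f 0 c <= f 0 (Defs.pred f)) /\
  (forall i, (forall c, f 0 c <= f 0 i) -> (Defs.pred f <= i)%N).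
Proof.
have [i1 _ i1_max] := @arg_maxP _ R _ ord0 xpredT (fun i => f 0 i) isT.
have i1P : [forall j, f 0 j <= f 0 i1] by apply/forallP => j; apply: i1_max.
rewrite (pred_arg_min i1P).
case: (@arg_minnP _ i1 (fun i => [forall j, f 0 j <= f 0 i]) (fun i => i : nat) i1P)
  => i /forallP i_max i_min.
by split => // j j_max; apply/i_min/forallP.
Qed.

Lemma pred_max f c : f 0 c <= f 0 (Defs.pred f).
Proof. by case: (predP f). Qed.

Lemma pred_min f i : (forall c, f 0 c <= f 0 i) -> (Defs.pred f <= i)%N.
Proof. by case: (predP f) => _; apply. Qed.

Lemma pred_lt f c : (c < Defs.pred f)%N -> f 0 c < f 0 (Defs.pred f).
Proof.
move=> c_lt; rewrite lt_neqAle pred_max andbT; apply/eqP => fc.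
move: c_lt; rewrite ltnNge => /negP; apply; apply: pred_min => d.
by rewrite fc pred_max.
Qed.

Lemma pred_eq f j : (forall c, f 0 c <= f 0 j) ->
  (forall c, (c < j)%N -> f 0 c < f 0 j) -> Defs.pred f = j.
Proof.
move=> j_max j_first; apply/val_inj/eqP; rewrite eqn_leq pred_min //= leqNgt.
by apply/negP => /j_first; rewrite ltNge pred_max.
Qed.

Lemma pred_addZ f g t : 0 < t -> (forall c, f 0 c <= f 0 (Defs.pred g)) ->
  Defs.pred (f + t *: g) = Defs.pred g.
Proof.
move=> t_gt0 f_max; apply: pred_eq => [c|c c_lt]; rewrite !mxE.
  by rewrite lerD ?f_max // ler_pM2l // pred_max.
by rewrite ler_ltD ?f_max // ltr_pM2l ?pred_lt.
Qed.

End ArgmaxPrediction.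

Section Calibration.
Variables (R : realType) (n : nat) (L : 'M[R]_n.+1).
Variables (Phi : 'rV[R]_n.+1 -> 'I_n.+1 -> R) (F : {vspace 'rV[R]_n.+1}).
Hypothesis Phi_cont : forall c, continuous (fun f : 'rV[R]_n.+1 => Phi f c).
Implicit Types (f g q : 'rV[R]_n.+1) (i j c : 'I_n.+1).

Lemma phi_continuous (q : 'rV[R]_n.+1) : continuous (phi Phi ^~ q).
Proof.
apply: continuous_big => [|c _]; first exact: add_continuous.
by move=> f; apply: continuousM; [exact: cst_continuous | exact: Phi_cont].
Qed.

Lemma phi_addZ_le f g q (e : R) : 0 < e ->
  exists2 t, 0 < t & phi Phi (f + t *: g) q <= phi Phi f q + e.
Proof.
move=> e_gt0.
have shift_cvg : f + t *: g @[t --> (0 : R)] --> f.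
  rewrite -[X in _ --> X]addr0; apply: cvgD; first exact: cvg_cst.
  by rewrite -(scale0r g); exact: scalel_continuous.
have phi_cvg : phi Phi (f + t *: g) q @[t --> (0 : R)^'+] --> phi Phi f q.
  apply: cvg_within_filter; exact: (cvg_comp _ _ shift_cvg (@phi_continuous q f)).
have /cvgrPdist_lt/(_ e e_gt0) phi_near := phi_cvg.
have [t [t_gt0 phi_t]] := filter_ex (filterI (nbhs_right_gt (0 : R)) phi_near).
exists t => //; rewrite -lerBlDl; apply: ltW.
by rewrite distrC in phi_t; exact: le_lt_trans (ler_norm _) phi_t.
Qed.

Definition ell_argmin q i :=
  predF F i /\ forall c, predF F c -> ellc L i q <= ellc L c q.

Lemma ell_pred f q : ell L f q = ellc L (Defs.pred f) q.
Proof. by apply: eq_bigr => c _; rewrite mulrC. Qed.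

Lemma predF_pred f : f \in F -> predF F (Defs.pred f).
Proof. by exists f. Qed.

Lemma exists_ell_argmin q : exists i, ell_argmin q i.
Proof.
have P0 : `[< predF F (Defs.pred (0 : 'rV[R]_n.+1)) >] by apply/asboolP/predF_pred/mem0v.
have [i /asboolP iP i_min] := @arg_minP _ R _ _ (fun i => `[< predF F i >]) (ellc L ^~ q) P0.
by exists i; split => // c /asboolP; apply: i_min.
Qed.

Lemma delta_ell_argmin f q i : ell_argmin q i ->
  delta_ell L F f q = (ellc L (Defs.pred f) q - ellc L i q)%:E.
Proof.
move=> [[g gF <-] i_min]; rewrite /delta_ell ell_pred EFinB; congr (_ - _)%E.
apply/le_anti/andP; split.
  by apply: ereal_inf_lbound; exists g => //; rewrite ell_pred.
by apply: le_ereal_inf_tmp => _ [h hF <-]; rewrite lee_fin ell_pred; apply/i_min/predF_pred.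
Qed.

Lemma delta_phi_ge_addZ (C : \bar R) f g q :
  (forall t, 0 < t -> (C <= delta_phi Phi F (f + t *: g) q)%E) ->
  (C <= delta_phi Phi F f q)%E.
Proof.
rewrite /delta_phi; set S := ereal_inf _ => C_le.
case: S C_le => [s | | ] C_le; last by rewrite leey.
- apply/lee_addgt0Pr => e e_gt0.
  have [t t_gt0 phi_t] := phi_addZ_le f g q e_gt0.
  apply: (le_trans (C_le t t_gt0)); rewrite -!EFinB -EFinD lee_fin.
  by rewrite addrAC lerD2r.
- exact: C_le 1 ltr01.
Qed.

Lemma calib_le_Hij eps i j : predF F i -> predF F j ->
  (calib L Phi F eps <= Hij L Phi F i j eps)%E.
Proof.
move=> iF [g gF pred_g].
apply: le_ereal_inf_tmp => _ [f [q [ell_gap [i_min [j_max [fF [q_simplex ->]]]]]]].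
apply: delta_phi_ge_addZ => t t_gt0; apply: ereal_inf_lbound.
exists (f + t *: g), q; split => //; first by rewrite memvD ?memvZ.
have pred_ft : Defs.pred (f + t *: g) = j.
  rewrite -pred_g pred_addZ // pred_g => c.
  exact: le_trans (pred_max f c) (j_max _ (predF_pred fF)).
by rewrite (delta_ell_argmin _ (conj iF i_min)) pred_ft lee_fin lerBrDr addrC -lerBrDr.
Qed.

Lemma Hmin_le_calib eps : 0 < eps -> (Hmin L Phi F eps <= calib L Phi F eps)%E.
Proof.
move=> eps_gt0; apply: le_ereal_inf_tmp => _ [f [q [fF q_simplex + ->]]].
have [i [iF i_min]] := exists_ell_argmin q.
rewrite (delta_ell_argmin f (conj iF i_min)) lee_fin => ell_gap.
have ij : i != Defs.pred f.
  by apply: contraTneq ell_gap => <-; rewrite subrr -ltNge.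
apply: le_trans (_ : Hij L Phi F i (Defs.pred f) eps <= _)%E.
  by apply: ereal_inf_lbound; exists i, (Defs.pred f); split => //; apply: predF_pred.
apply: ereal_inf_lbound; exists f, q; split; first by rewrite lerBrDr addrC -lerBrDr.
by split => //; split => // c _; apply: pred_max.
Qed.

End Calibration.

Theorem lemma10 (R : realType) (n : nat) (L : 'M[R]_n.+1)
    (Phi : 'rV[R]_n.+1 -> 'I_n.+1 -> R) (F : {vspace 'rV[R]_n.+1}) (eps : R) :
  (forall i j, 0 <= L i j) ->
  (forall c, continuous (fun f : 'rV[R]_n.+1 => Phi f c)) ->
  (exists m : R, forall f c, m <= Phi f c) ->
  0 < eps ->
  calib L Phi F eps = Hmin L Phi F eps.
Proof.
move=> _ Phi_cont _ eps_gt0; apply/le_anti/andP; split; last exact: Hmin_le_calib.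
apply: le_ereal_inf_tmp => _ [i [j [iF jF _ ->]]].
exact: calib_le_Hij.
Qed.
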